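(* Two measure-and-prepare instruments $\mathcal{I}\in\mathrm{Ins}(\Omega,\mathcal{H},\mathcal{K})$ and $\mathcal{J}\in\mathrm{Ins}(\Lambda,\mathcal{H},\mathcal{V})$ are compatible if and only if their induced POVMs $\mathsf{A}^{\mathcal{I}}$ and $\mathsf{A}^{\mathcal{J}}$ are compatible.
   Context: All Hilbert spaces are finite-dimensional and complex, and all outcome sets are finite. A POVM $\mathsf{A}\in\mathcal{O}(\Omega,\mathcal{H})$ is a map $x\mapsto\mathsf{A}(x)$ to positive operators with $\sum_x\mathsf{A}(x)=I$; POVMs $\mathsf{A}\in\mathcal{O}(\Omega,\mathcal{H})$, $\mathsf{B}\in\mathcal{O}(\Lambda,\mathcal{H})$ are compatible if there is $\mathsf{G}\in\mathcal{O}(\Omega\times\Lambda,\mathcal{H})$ with $\sum_x\mathsf{G}(x,y)=\mathsf{B}(y)$ and $\sum_y\mathsf{G}(x,y)=\mathsf{A}(x)$. An instrument $\mathcal{I}\in\mathrm{Ins}(\Omega,\mathcal{H},\mathcal{K})$ is a family $(\mathcal{I}_x)_{x\in\Omega}$ of completely positive trace-nonincreasing linear maps $\mathcal{L}(\mathcal{H})\to\mathcal{L}(\mathcal{K})$ whose sum is trace preserving; its induced POVM is given by $\mathrm{tr}[\mathsf{A}^{\mathcal{I}}(x)\varrho]=\mathrm{tr}[\mathcal{I}_x(\varrho)]$. It is measure-and-prepare if there are a POVM $\mathsf{A}$ and states $\{\xi_x\}$ on $\mathcal{K}$ with $\mathcal{I}_x(\varrho)=\mathrm{tr}[\mathsf{A}(x)\varrho]\xi_x$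 for all $x,\varrho$. Two instruments $\mathcal{I}\in\mathrm{Ins}(\Omega,\mathcal{H},\mathcal{K})$, $\mathcal{J}\in\mathrm{Ins}(\Lambda,\mathcal{H},\mathcal{V})$ are compatible if there is $\mathcal{G}\in\mathrm{Ins}(\Omega\times\Lambda,\mathcal{H},\mathcal{K}\otimes\mathcal{V})$ with $\sum_{x}\mathrm{tr}_{\mathcal{K}}[\mathcal{G}_{(x,y)}(\varrho)]=\mathcal{J}_y(\varrho)$ for all $y$ and $\sum_y\mathrm{tr}_{\mathcal{V}}[\mathcal{G}_{(x,y)}(\varrho)]=\mathcal{I}_x(\varrho)$ for all $x$, for all states $\varrho$. *)

From HB Require Import structures.
From mathcomp Require Import all_boot all_order all_algebra.
From mathcomp Require Import mxtens.
Set Implicit Arguments. Unset Strict Implicit. Unset Printing Implicit Defensive.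
Import Order.TTheory GRing.Theory Num.Theory.
Local Open Scope ring_scope.

Section Quantum.
Variable C : numClosedFieldType.

Definition adjmx (p q : nat) (X : 'M[C]_(p, q)) : 'M[C]_(q, p) :=
  map_mx Num.conj (X^T).

Definition psd (d : nat) (A : 'M[C]_d) : Prop :=
  A = adjmx A /\ forall v : 'cV[C]_d, 0 <= (adjmx v *m A *m v) 0 0.

Definition state (d : nat) (rho : 'M[C]_d) : Prop := psd rho /\ \tr rho = 1.

Definition povm (Om : finType) (d : nat) (A : Om -> 'M[C]_d) : Prop :=
  (forall x, psd (A x)) /\ \sum_(x : Om) A x = 1%:M.

Definition povm_compatible (Om La : finType) (d : nat)
    (A : Om -> 'M[C]_d) (B : La -> 'M[C]_d) : Prop :=
  exists G : (Om * La)%type -> 'M[C]_d,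
    povm G /\
    (forall y, \sum_(x : Om) G (x, y) = B y) /\
    (forall x, \sum_(y : La) G (x, y) = A x).

(* Tensor-product index convention: 'I_(k * n) ~ 'I_k * 'I_n via mxtens_index. *)
Definition blockmx (k n : nat) (X : 'M[C]_(k * n)) (i j : 'I_k) : 'M[C]_n :=
  \matrix_(a, b) X (mxtens_index (i, a)) (mxtens_index (j, b)).

(* id_k (x) Phi *)
Definition ampl (k n m : nat) (Phi : 'M[C]_n -> 'M[C]_m) (X : 'M[C]_(k * n))
  : 'M[C]_(k * m) :=
  \matrix_(p, q) Phi (blockmx X (mxtens_unindex p).1 (mxtens_unindex q).1)
                    (mxtens_unindex p).2 (mxtens_unindex q).2.

Definition completely_positive (n m : nat) (Phi : 'M[C]_n -> 'M[C]_m) : Prop :=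
  forall (k : nat) (X : 'M[C]_(k * n)), psd X -> psd (ampl Phi X).

Definition trace_nonincreasing (n m : nat) (Phi : 'M[C]_n -> 'M[C]_m) : Prop :=
  forall rho : 'M[C]_n, psd rho -> \tr (Phi rho) <= \tr rho.

Definition instrument (Om : finType) (n m : nat)
    (I : Om -> 'M[C]_n -> 'M[C]_m) : Prop :=
  (forall x, linear (I x)) /\
  (forall x, completely_positive (I x)) /\
  (forall x, trace_nonincreasing (I x)) /\
  (forall rho : 'M[C]_n, \tr (\sum_(x : Om) I x rho) = \tr rho).

Definition induced_povm (Om : finType) (n m : nat)
    (I : Om -> 'M[C]_n -> 'M[C]_m) (A : Om -> 'M[C]_n) : Prop :=
  povm A /\ forall x (rho : 'M[C]_n), state rho -> \tr (A x *m rho) = \tr (I x rho).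

Definition measure_and_prepare (Om : finType) (n m : nat)
    (I : Om -> 'M[C]_n -> 'M[C]_m) : Prop :=
  instrument I /\
  exists (A : Om -> 'M[C]_n) (xi : Om -> 'M[C]_m),
    povm A /\ (forall x, state (xi x)) /\
    forall x (rho : 'M[C]_n), I x rho = \tr (A x *m rho) *: xi x.

Definition ptrace1 (m p : nat) (Y : 'M[C]_(m * p)) : 'M[C]_p :=
  \matrix_(b, c) \sum_(a < m) Y (mxtens_index (a, b)) (mxtens_index (a, c)).
Definition ptrace2 (m p : nat) (Y : 'M[C]_(m * p)) : 'M[C]_m :=
  \matrix_(a, c) \sum_(b < p) Y (mxtens_index (a, b)) (mxtens_index (c, b)).

Definition instrument_compatible (Om La : finType) (n m p : nat)
    (I : Om -> 'M[C]_n -> 'M[C]_m) (J : La -> 'M[C]_n -> 'M[C]_p) : Prop :=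
  exists G : (Om * La)%type -> 'M[C]_n -> 'M[C]_(m * p),
    instrument G /\
    (forall rho : 'M[C]_n, state rho ->
       (forall y, \sum_(x : Om) ptrace1 (G (x, y) rho) = J y rho) /\
       (forall x, \sum_(y : La) ptrace2 (G (x, y) rho) = I x rho)).

End Quantum.

From HB Require Import structures.
From mathcomp Require Import all_boot all_order all_algebra.
From mathcomp Require Import mxtens ring.
Set Implicit Arguments. Unset Strict Implicit. Unset Printing Implicit Defensive.
Import Order.TTheory GRing.Theory Num.Theory.
Local Open Scope ring_scope.

(* The forward direction holds for arbitrary instruments: the effects
   [G_(x,y)^*(1)] induced by a joint instrument [G] form a joint POVM, because
   partial traces preserve the trace and a matrix is determined by its traces
   against all states.  Conversely, if [G] is a joint POVM of the induced POVMs
   and [I], [J] prepare the states [xi x], [eta y], then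
   [rho |-> tr (G (x, y) rho) (xi x (x) eta y)] is a joint instrument.  Its
   complete positivity follows by factoring positive matrices as [F F^*]
   (spectral theorem), which makes tensor products of positive matrices and the
   block-trace matrix [(tr (P X_ij))_ij] of a positive [X] positive. *)

Lemma sum_mxtens_index (R : nmodType) a b (F : 'I_(a * b) -> R) :
  \sum_p F p = \sum_i \sum_j F (mxtens_index (i, j)).
Proof.
rewrite pair_bigA (reindex (@mxtens_index a b)) /=; first by apply: eq_bigr => -[].
by exists (@mxtens_unindex a b) => x _; [exact: mxtens_indexK | exact: mxtens_unindexK].
Qed.

Section Quantum.
Variable C : numClosedFieldType.

Lemma adjmxE p q (X : 'M[C]_(p, q)) i j : adjmx X i j = (X j i)^*.
Proof. by rewrite !mxE. Qed.

Lemma adjmxK p q (X : 'M[C]_(p, q)) : adjmx (adjmx X) = X.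
Proof. exact: trmxCK. Qed.

Lemma adjmxD p q (X Y : 'M[C]_(p, q)) : adjmx (X + Y) = adjmx X + adjmx Y.
Proof. by rewrite /adjmx linearD map_mxD. Qed.

Lemma adjmxZ p q c (X : 'M[C]_(p, q)) : adjmx (c *: X) = c^* *: adjmx X.
Proof. by rewrite /adjmx linearZ map_mxZ. Qed.

Lemma adjmxM p q r (X : 'M[C]_(p, q)) (Y : 'M[C]_(q, r)) :
  adjmx (X *m Y) = adjmx Y *m adjmx X.
Proof. by rewrite /adjmx trmx_mul map_mxM. Qed.

Lemma adjmx1 d : adjmx (1%:M : 'M[C]_d) = 1%:M.
Proof. by rewrite /adjmx trmx1 map_mx1. Qed.

Lemma adjmx_delta p q (i : 'I_p) (j : 'I_q) :
  adjmx (delta_mx i j : 'M[C]_(p, q)) = delta_mx j i.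
Proof. by rewrite /adjmx trmx_delta map_delta_mx. Qed.

Lemma adjmx_tens p q r s (X : 'M[C]_(p, q)) (Y : 'M[C]_(r, s)) :
  adjmx (X *t Y) = adjmx X *t adjmx Y.
Proof. by rewrite /adjmx trmx_tens map_mxT. Qed.

Definition qform d (A : 'M[C]_d) (v : 'cV[C]_d) : C := (adjmx v *m A *m v) 0 0.

Lemma qformE d (A : 'M[C]_d) v :
  qform A v = \sum_a \sum_b (v a 0)^* * A a b * v b 0.
Proof.
rewrite /qform mxE exchange_big; apply: eq_bigr => b _.
by rewrite mxE big_distrl; apply: eq_bigr => a _; rewrite !mxE.
Qed.

Lemma entry_delta_sandwich d (A : 'M[C]_d) i j :
  (adjmx (delta_mx i 0 : 'cV[C]_d) *m A *m (delta_mx j 0 : 'cV[C]_d)) 0 0 = A i j.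
Proof. by rewrite adjmx_delta -rowE -colE !mxE. Qed.

Lemma qformB d (A B : 'M[C]_d) v : qform (A - B) v = qform A v - qform B v.
Proof. by rewrite /qform mulmxBr mulmxBl !mxE. Qed.

Lemma qformZ d c (A : 'M[C]_d) v : qform (c *: A) v = c * qform A v.
Proof. by rewrite /qform -scalemxAr -scalemxAl mxE. Qed.

Lemma qform_adjmx d (A : 'M[C]_d) v : qform (adjmx A) v = (qform A v)^*.
Proof. by rewrite /qform -adjmxE !adjmxM adjmxK mulmxA. Qed.

Lemma qform_trace d (A : 'M[C]_d) v : qform A v = \tr (A *m (v *m adjmx v)).
Proof. by rewrite /qform -trace_mx11 -mulmxA mxtrace_mulC -mulmxA. Qed.

Lemma qform_eq0 d (D : 'M[C]_d) : (forall v, qform D v = 0) -> D = 0.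
Proof.
(* Polarization: the values at [e_a + c e_b] for [c = 0, 1, 'i] determine [D a b]. *)
move=> D0; apply/matrixP=> i j; rewrite mxE.
have polar a b c : qform D (delta_mx a 0 + c *: delta_mx b 0) =
    D a a + c * D a b + c^* * D b a + c^* * c * D b b.
  rewrite /qform adjmxD adjmxZ !(mulmxDl, mulmxDr) -!scalemxAl -!scalemxAr.
  by rewrite -trace_mx11 !(mxtraceD, mxtraceZ) !trace_mx11 !entry_delta_sandwich; ring.
have Dii := polar i j 0; rewrite D0 rmorph0 !mul0r !addr0 in Dii.
have Djj := polar j i 0; rewrite D0 rmorph0 !mul0r !addr0 in Djj.
have D1 := polar i j 1; rewrite D0 rmorph1 !mul1r -Dii -Djj add0r addr0 in D1.
have Di := polar i j 'i; rewrite D0 conjCi -Dii -Djj mulr0 add0r addr0 in Di.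
have Dji : D j i = - D i j by apply/eqP; rewrite -addr_eq0 addrC -D1.
have : 'i * (D i j *+ 2) = 0 by rewrite Dji in Di; rewrite [RHS]Di; ring.
by move/eqP; rewrite mulf_eq0 (negPf (neq0Ci C)) mulrn_eq0 => /eqP.
Qed.

(* Over C, nonnegativity of the quadratic form already forces hermiticity. *)
Lemma psd_qform d (A : 'M[C]_d) : (forall v, 0 <= qform A v) -> psd A.
Proof.
move=> A_ge0; split=> //; apply/eqP; rewrite -subr_eq0; apply/eqP/qform_eq0 => v.
by rewrite qformB qform_adjmx; have /CrealP -> := ger0_real (A_ge0 v); rewrite subrr.
Qed.

Lemma adjmx_mul_ge0 p (w : 'cV[C]_p) : 0 <= (adjmx w *m w) 0 0.
Proof. by rewrite mxE; apply: sumr_ge0 => i _; rewrite !mxE mulrC mul_conjC_ge0. Qed.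

Lemma adjmx_mul_eq0 p (w : 'cV[C]_p) : ((adjmx w *m w) 0 0 == 0) = (w == 0).
Proof.
apply/idP/eqP=> [|->]; last by rewrite mulmx0 mxE.
rewrite mxE psumr_eq0 => [/allP w0|i _]; last by rewrite !mxE mulrC mul_conjC_ge0.
apply/matrixP=> i j; rewrite (ord1 j) !mxE; apply/eqP.
by rewrite -mul_conjC_eq0 mulrC -(adjmxE w) (eqP (w0 i (mem_index_enum i))).
Qed.

Lemma psd_mul_adjmx p q (F : 'M[C]_(p, q)) : psd (F *m adjmx F).
Proof.
apply: psd_qform => v; rewrite /qform.
have -> : adjmx v *m (F *m adjmx F) *m v = adjmx (adjmx F *m v) *m (adjmx F *m v).
  by rewrite adjmxM adjmxK !mulmxA.
exact: adjmx_mul_ge0.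
Qed.

Lemma psd_factor d (A : 'M[C]_d) : psd A -> exists F : 'M[C]_d, A = F *m adjmx F.
Proof.
case=> A_herm A_ge0.
have /orthomx_spectralP : A \is normalmx.
  by rewrite qualifE -/(adjmx A) -A_herm.
set P := spectralmx A; set s := spectral_diag A => A_spec.
have P_unitary : P \is unitarymx := spectral_unitarymx A.
rewrite invmx_unitary // -/(adjmx P) in A_spec.
have s_ge0 l : 0 <= s 0 l.
  have := A_ge0 (adjmx P *m delta_mx l 0).
  rewrite adjmxM adjmxK A_spec !mulmxA !mulmxtVK //.
  by rewrite entry_delta_sandwich mxE eqxx mulr1n.
pose r := \row_l sqrtC (s 0 l).
have adjmx_r : adjmx (diag_mx r) = diag_mx r.
  rewrite /adjmx tr_diag_mx map_diag_mx; congr diag_mx; apply/rowP=> l.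
  by rewrite !mxE; apply/CrealP/ger0_real; rewrite sqrtC_ge0.
have rr : diag_mx r *m diag_mx r = diag_mx s.
  by rewrite mulmx_diag; congr diag_mx; apply/rowP=> l; rewrite !mxE -expr2 sqrtCK.
exists (adjmx P *m diag_mx r).
by rewrite adjmxM adjmxK adjmx_r !mulmxA -(mulmxA _ (diag_mx r) (diag_mx r)) rr.
Qed.

Lemma psd_congr p q (W : 'M[C]_(p, q)) (X : 'M[C]_p) :
  psd X -> psd (adjmx W *m X *m W).
Proof.
case=> _ X_ge0; apply: psd_qform => v.
by have := X_ge0 (W *m v); rewrite /qform adjmxM !mulmxA.
Qed.

Lemma psd_diag_ge0 d (A : 'M[C]_d) i : psd A -> 0 <= A i i.
Proof. by case=> _ /(_ (delta_mx i 0)); rewrite entry_delta_sandwich. Qed.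

Lemma psd_trace_ge0 d (A : 'M[C]_d) : psd A -> 0 <= \tr A.
Proof. by move=> A_psd; apply: sumr_ge0 => i _; exact: psd_diag_ge0. Qed.

Lemma mxtrace_mul_psd_ge0 d (P Y : 'M[C]_d) : psd P -> psd Y -> 0 <= \tr (P *m Y).
Proof.
move=> P_psd /psd_factor [F ->]; rewrite mulmxA mxtrace_mulC mulmxA.
exact/psd_trace_ge0/psd_congr.
Qed.

Lemma psdZ d c (A : 'M[C]_d) : 0 <= c -> psd A -> psd (c *: A).
Proof.
move=> c_ge0 [_ A_ge0]; apply: psd_qform => v.
by rewrite qformZ mulr_ge0 // A_ge0.
Qed.

Lemma psd1 d : psd (1%:M : 'M[C]_d).
Proof. by have := psd_mul_adjmx (1%:M : 'M[C]_d); rewrite adjmx1 mulmx1. Qed.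

Lemma psd_tens p q (A : 'M[C]_p) (B : 'M[C]_q) : psd A -> psd B -> psd (A *t B).
Proof.
move=> /psd_factor [F ->] /psd_factor [G ->].
rewrite -tensmx_mul -adjmx_tens; exact: psd_mul_adjmx.
Qed.

Lemma mxtrace_tens p q (X : 'M[C]_p) (Y : 'M[C]_q) : \tr (X *t Y) = \tr X * \tr Y.
Proof.
rewrite /mxtrace sum_mxtens_index big_distrlr /=.
by apply: eq_bigr => i _; apply: eq_bigr => j _; rewrite tensmxE.
Qed.

Lemma state_tens p q (X : 'M[C]_p) (Y : 'M[C]_q) :
  state X -> state Y -> state (X *t Y).
Proof.
case=> X_psd X_tr [Y_psd Y_tr]; split; first exact: psd_tens.
by rewrite mxtrace_tens X_tr Y_tr mulr1.
Qed.

Lemma trace_states_inj d (A B : 'M[C]_d) :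
  (forall rho, state rho -> \tr (A *m rho) = \tr (B *m rho)) -> A = B.
Proof.
move=> AB; apply/eqP; rewrite -subr_eq0; apply/eqP/qform_eq0 => v.
have [->|v_neq0] := eqVneq v 0; first by rewrite /qform mulmx0 mxE.
set r := (adjmx v *m v) 0 0.
have r_gt0 : 0 < r by rewrite lt0r adjmx_mul_eq0 v_neq0 adjmx_mul_ge0.
have r_inv_neq0 : r^-1 != 0 by rewrite invr_eq0 gt_eqF.
have rho_state : state (r^-1 *: (v *m adjmx v)).
  split; first by apply: psdZ; [rewrite invr_ge0 ltW | exact: psd_mul_adjmx].
  by rewrite mxtraceZ mxtrace_mulC trace_mx11 mulVf // gt_eqF.
have := AB _ rho_state; rewrite -!scalemxAr !mxtraceZ -!qform_trace.
by move=> /(mulfI r_inv_neq0) AvBv; rewrite qformB AvBv subrr.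
Qed.

Lemma mxtrace_suml (Om : finType) n (A : Om -> 'M[C]_n) rho :
  \tr ((\sum_x A x) *m rho) = \sum_x \tr (A x *m rho).
Proof. by rewrite mulmx_suml raddf_sum. Qed.

Lemma povm_mxtrace_sum (Om : finType) n (A : Om -> 'M[C]_n) rho :
  povm A -> \sum_x \tr (A x *m rho) = \tr rho.
Proof. by case=> _ A_sum; rewrite -mxtrace_suml A_sum mul1mx. Qed.

Lemma mxtrace_tens_blocks k n (M : 'M[C]_k) (P : 'M[C]_n) (X : 'M[C]_(k * n)) :
  \tr ((M *t P) *m X) = \sum_i \sum_j M i j * \tr (P *m blockmx X j i).
Proof.
rewrite /mxtrace sum_mxtens_index; apply: eq_bigr => i _.
under eq_bigr => a _ do rewrite mxE sum_mxtens_index.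
rewrite exchange_big; apply: eq_bigr => j _; rewrite big_distrr.
apply: eq_bigr => a _; rewrite mxE big_distrr; apply: eq_bigr => b _.
by rewrite tensmxE !mxE -mulrA.
Qed.

Lemma psd_trace_blocks k n (P : 'M[C]_n) (X : 'M[C]_(k * n)) :
  psd P -> psd X -> psd (\matrix_(i, j) \tr (P *m blockmx X i j)).
Proof.
move=> P_psd X_psd; apply: psd_qform => v.
(* The form equals [tr ((1 (x) P) Z)] for the compression [Z = (v (x) 1)^* X (v (x) 1)]. *)
have -> : qform (\matrix_(i, j) \tr (P *m blockmx X i j)) v =
    \tr ((v *m adjmx v) *t P *m X).
  rewrite mxtrace_tens_blocks qformE exchange_big /=.
  apply: eq_bigr => i _; apply: eq_bigr => j _.
  by rewrite !mxE big_ord1 !mxE; ring.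
have Z_psd := psd_congr (v *t (1%:M : 'M[C]_n)) X_psd.
have := mxtrace_mul_psd_ge0 (psd_tens (psd1 1) P_psd) Z_psd.
rewrite adjmx_tens adjmx1 !mulmxA tensmx_mul mul1mx mulmx1 mxtrace_mulC mulmxA.
by rewrite tensmx_mul mul1mx.
Qed.

Lemma cp_measure_prepare n m (P : 'M[C]_n) (S : 'M[C]_m) :
  psd P -> psd S -> completely_positive (fun rho => \tr (P *m rho) *: S).
Proof.
move=> P_psd S_psd k X X_psd.
have -> : ampl (fun rho => \tr (P *m rho) *: S) X =
    (\matrix_(i, j) \tr (P *m blockmx X i j)) *t S.
  by apply/matrixP => p q; rewrite !mxE.
exact: psd_tens (psd_trace_blocks P_psd X_psd) S_psd.
Qed.

Lemma cp_mxtrace_ge0 n m (Phi : 'M[C]_n -> 'M[C]_m) (Y : 'M[C]_n) :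
  completely_positive Phi -> psd Y -> 0 <= \tr (Phi Y).
Proof.
move=> Phi_cp Y_psd.
have X_psd : psd ((1%:M : 'M[C]_1) *t Y) := psd_tens (psd1 1) Y_psd.
have X_block : blockmx ((1%:M : 'M[C]_1) *t Y) 0 0 = Y.
  by apply/matrixP => a b; rewrite mxE tensmxE mxE mul1r.
apply: sumr_ge0 => a _.
have := psd_diag_ge0 (mxtens_index (0 : 'I_1, a)) (Phi_cp 1%N _ X_psd).
by rewrite mxE mxtens_indexK X_block.
Qed.

Lemma ptrace1_tens p q (X : 'M[C]_p) (Y : 'M[C]_q) : ptrace1 (X *t Y) = \tr X *: Y.
Proof.
apply/matrixP=> i j; rewrite !mxE big_distrl; apply: eq_bigr => a _.
by rewrite tensmxE.
Qed.

Lemma ptrace2_tens p q (X : 'M[C]_p) (Y : 'M[C]_q) : ptrace2 (X *t Y) = \tr Y *: X.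
Proof.
apply/matrixP=> i j; rewrite !mxE big_distrl; apply: eq_bigr => b _.
by rewrite tensmxE mulrC.
Qed.

Lemma ptrace1Z p q c (Y : 'M[C]_(p * q)) : ptrace1 (c *: Y) = c *: ptrace1 Y.
Proof.
apply/matrixP=> i j; rewrite !mxE big_distrr; apply: eq_bigr => a _.
by rewrite mxE.
Qed.

Lemma ptrace2Z p q c (Y : 'M[C]_(p * q)) : ptrace2 (c *: Y) = c *: ptrace2 Y.
Proof.
apply/matrixP=> i j; rewrite !mxE big_distrr; apply: eq_bigr => b _.
by rewrite mxE.
Qed.

Lemma mxtrace_ptrace1 p q (Y : 'M[C]_(p * q)) : \tr (ptrace1 Y) = \tr Y.
Proof.
by rewrite /mxtrace sum_mxtens_index exchange_big; apply: eq_bigr => b _; rewrite mxE.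
Qed.

Lemma mxtrace_ptrace2 p q (Y : 'M[C]_(p * q)) : \tr (ptrace2 Y) = \tr Y.
Proof. by rewrite /mxtrace sum_mxtens_index; apply: eq_bigr => a _; rewrite mxE. Qed.

Section DualMatrix.
Variables (n m : nat) (Phi : 'M[C]_n -> 'M[C]_m).

(* The Heisenberg-picture image [Phi^*(1)] of the identity. *)
Definition dualmx : 'M[C]_n := \matrix_(i, j) \tr (Phi (delta_mx j i)).

Hypothesis Phi_lin : linear Phi.
HB.instance Definition _ := GRing.isLinear.Build C 'M[C]_n 'M[C]_m *:%R Phi Phi_lin.

Lemma mxtrace_dualmx rho : \tr (dualmx *m rho) = \tr (Phi rho).
Proof.
transitivity (\sum_j \sum_i \tr (Phi (delta_mx i j)) * rho i j).
  by rewrite /mxtrace; apply: eq_bigr => j _; rewrite mxE; apply: eq_bigr => i _; rewrite mxE.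
rewrite [in RHS](matrix_sum_delta rho) linear_sum raddf_sum /=.
under [RHS]eq_bigr do rewrite linear_sum raddf_sum /=.
rewrite exchange_big; apply: eq_bigr => j _; apply: eq_bigr => i _.
by rewrite linearZ mxtraceZ mulrC.
Qed.

Lemma psd_dualmx : completely_positive Phi -> psd dualmx.
Proof.
move=> Phi_cp; apply: psd_qform => v; rewrite qform_trace mxtrace_dualmx.
exact/cp_mxtrace_ge0/psd_mul_adjmx.
Qed.

End DualMatrix.

Lemma induced_povm_dualmx (Om : finType) n m (I : Om -> 'M[C]_n -> 'M[C]_m) :
  instrument I -> induced_povm I (fun x => dualmx (I x)).
Proof.
case=> I_lin [I_cp [_ I_tp]].
split=> [|x rho _]; last exact: (mxtrace_dualmx (I_lin x) rho).
split=> [x|]; first exact: psd_dualmx.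
apply: trace_states_inj => rho _; rewrite mul1mx mxtrace_suml -[RHS]I_tp raddf_sum.
by apply: eq_bigr => x _; rewrite (mxtrace_dualmx (I_lin x)).
Qed.

Lemma instrument_measure_prepare (Om : finType) n m
    (A : Om -> 'M[C]_n) (xi : Om -> 'M[C]_m) :
  povm A -> (forall x, state (xi x)) ->
  instrument (fun x rho => \tr (A x *m rho) *: xi x).
Proof.
move=> A_povm xi_state; have [A_psd _] := A_povm.
split; [|split; [|split]].
- move=> x a u v.
  by rewrite mulmxDr -scalemxAr mxtraceD mxtraceZ scalerDl scalerA.
- by move=> x; apply: cp_measure_prepare => //; case: (xi_state x).
- move=> x rho rho_psd; rewrite mxtraceZ (xi_state x).2 mulr1.
  rewrite -(povm_mxtrace_sum rho A_povm) (bigD1 x) //= lerDl.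
  by apply: sumr_ge0 => y _; exact: mxtrace_mul_psd_ge0.
- move=> rho; rewrite raddf_sum /= -(povm_mxtrace_sum rho A_povm).
  by apply: eq_bigr => x _; rewrite mxtraceZ (xi_state x).2 mulr1.
Qed.

Lemma measure_prepare_induced_povm (Om : finType) n m
    (I : Om -> 'M[C]_n -> 'M[C]_m) (A AI : Om -> 'M[C]_n) (xi : Om -> 'M[C]_m) :
  (forall x, state (xi x)) -> (forall x rho, I x rho = \tr (A x *m rho) *: xi x) ->
  induced_povm I AI -> forall x, AI x = A x.
Proof.
move=> xi_state EI [_ AI_tr] x; apply: trace_states_inj => rho rho_state.
by rewrite AI_tr // EI mxtraceZ (xi_state x).2 mulr1.
Qed.

Lemma povm_compatible_induced (Om La : finType) n m p
    (I : Om -> 'M[C]_n -> 'M[C]_m) (J : La -> 'M[C]_n -> 'M[C]_p)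
    (AI : Om -> 'M[C]_n) (AJ : La -> 'M[C]_n) :
  induced_povm I AI -> induced_povm J AJ ->
  instrument_compatible I J -> povm_compatible AI AJ.
Proof.
move=> [_ AI_tr] [_ AJ_tr] [G [G_ins G_marg]].
have [G_povm G_tr] := induced_povm_dualmx G_ins.
exists (fun xy => dualmx (G xy)); split=> //.
split=> [y|x]; apply: trace_states_inj => rho rho_state; rewrite mxtrace_suml.
- rewrite AJ_tr // -(G_marg rho rho_state).1 raddf_sum /=.
  by apply: eq_bigr => x _; rewrite G_tr // mxtrace_ptrace1.
- rewrite AI_tr // -(G_marg rho rho_state).2 raddf_sum /=.
  by apply: eq_bigr => y _; rewrite G_tr // mxtrace_ptrace2.
Qed.

Lemma instrument_compatible_measure_prepare (Om La : finType) n m p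
    (I : Om -> 'M[C]_n -> 'M[C]_m) (J : La -> 'M[C]_n -> 'M[C]_p)
    (A : Om -> 'M[C]_n) (B : La -> 'M[C]_n)
    (xi : Om -> 'M[C]_m) (eta : La -> 'M[C]_p) :
  (forall x, state (xi x)) -> (forall y, state (eta y)) ->
  (forall x rho, I x rho = \tr (A x *m rho) *: xi x) ->
  (forall y rho, J y rho = \tr (B y *m rho) *: eta y) ->
  povm_compatible A B -> instrument_compatible I J.
Proof.
move=> xi_state eta_state EI EJ [G [G_povm [G_y G_x]]].
exists (fun xy rho => \tr (G xy *m rho) *: (xi xy.1 *t eta xy.2)); split.
  by apply: instrument_measure_prepare => // -[x y]; apply: state_tens.
move=> rho _; split=> [y|x].
- under eq_bigr do rewrite /= ptrace1Z ptrace1_tens (xi_state _).2 scale1r.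
  by rewrite -scaler_suml -mxtrace_suml G_y EJ.
- under eq_bigr do rewrite /= ptrace2Z ptrace2_tens (eta_state _).2 scale1r.
  by rewrite -scaler_suml -mxtrace_suml G_x EI.
Qed.

End Quantum.

Theorem proposition9 (C : numClosedFieldType) (Om La : finType) (n m p : nat)
    (I : Om -> 'M[C]_n -> 'M[C]_m) (J : La -> 'M[C]_n -> 'M[C]_p)
    (AI : Om -> 'M[C]_n) (AJ : La -> 'M[C]_n) :
  measure_and_prepare I -> measure_and_prepare J ->
  induced_povm I AI -> induced_povm J AJ ->
  (instrument_compatible I J <-> povm_compatible AI AJ).
Proof.
move=> [_ [A [xi [_ [xi_state EI]]]]] [_ [B [eta [_ [eta_state EJ]]]]] I_AI J_AJ.
have AI_A := measure_prepare_induced_povm xi_state EI I_AI.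
have AJ_B := measure_prepare_induced_povm eta_state EJ J_AJ.
split; first exact: povm_compatible_induced.
apply: (instrument_compatible_measure_prepare xi_state eta_state).
- by move=> x rho; rewrite AI_A EI.
- by move=> y rho; rewrite AJ_B EJ.
Qed.
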